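(* Consider a SOCO problem with decision space $F=[x_L,x_H]$ and a sequence of discrete systems, indexed by $i$, whose state spacings $\delta_i$ tend to $0$ and each of which has $[x_1,x_m]=F$. Let $OPT_D^i$ be the optimal cost in the $i$-th discrete system and $OPT_C$ the optimal cost in the continuous system, both under the norm $N$. Then $\lim_{i\to\infty}|OPT_D^i-OPT_C|=0$.
   Context: $F=[x_L,x_H]\subseteq\mathbb{R}^+$; $\|\cdot\|$ a norm on $\mathbb{R}$; $\theta\ge1$, $N(\cdot)=\theta\|\cdot\|$; cost functions $c^1,\dots,c^T:F\to\mathbb{R}^+$ convex (finite on $F$) with uniformly bounded subgradients; horizon $T$ fixed. A discrete system is a set of states $M=\{x_1<\dots<x_m\}\subseteq F$ with equal spacing $\delta=x_{k+1}-x_k$, $x_1=x_L$, $x_m=x_H$. The optimal cost over a state set $S$ ($S=M$ or $S=F$) under norm $N$ is $\min_{(x^1,\dots,x^T)\in S^T}\sum_{t=1}^Tc^t(x^t)+N(x^t-x^{t-1})$ with $x^0=0$. *)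

From Stdlib Require Import Reals Lra.
From Coquelicot Require Import Coquelicot.
Open Scope R_scope.

Definition is_norm (nrm : R -> R) : Prop :=
  (forall x, 0 <= nrm x) /\
  (forall x, nrm x = 0 -> x = 0) /\
  (forall a x, nrm (a * x) = Rabs a * nrm x) /\
  (forall x y, nrm (x + y) <= nrm x + nrm y).

Definition inF (xL xH x : R) : Prop := xL <= x <= xH.

Definition convex_on (xL xH : R) (f : R -> R) : Prop :=
  forall x y l, inF xL xH x -> inF xL xH y -> 0 <= l <= 1 ->
    f (l * x + (1 - l) * y) <= l * f x + (1 - l) * f y.

Definition subgradient (xL xH : R) (f : R -> R) (x g : R) : Prop :=
  forall y, inF xL xH y -> f x + g * (y - x) <= f y.

Definition unif_bounded_subgrad (xL xH : R) (c : nat -> R -> R) (T : nat) : Prop :=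
  exists G : R, forall t x, (1 <= t <= T)%nat -> inF xL xH x ->
    exists g, Rabs g <= G /\ subgradient xL xH (c t) x g.

Fixpoint traj_cost (c : nat -> R -> R) (N : R -> R) (x : nat -> R) (T : nat) : R :=
  match T with
  | O => 0
  | S T' => traj_cost c N x T' + c (S T') (x (S T')) + N (x (S T') - x T')
  end.

Definition admissible (S : R -> Prop) (T : nat) (x : nat -> R) : Prop :=
  x O = 0 /\ forall t, (1 <= t <= T)%nat -> S (x t).

Definition is_opt_cost (c : nat -> R -> R) (N : R -> R) (T : nat)
    (S : R -> Prop) (v : R) : Prop :=
  (exists x, admissible S T x /\ traj_cost c N x T = v) /\
  (forall x, admissible S T x -> v <= traj_cost c N x T).

Definition disc_states (xL delta : R) (m : nat) (x : R) : Prop :=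
  exists k : nat, (k < m)%nat /\ x = xL + INR k * delta.

(* (delta, m) describes a discrete system on F: delta > 0, m >= 1,
   x_1 = xL and x_m = xL + (m-1) delta = xH. *)
Definition valid_disc_system (xL xH delta : R) (m : nat) : Prop :=
  0 < delta /\ (1 <= m)%nat /\ xL + INR (m - 1) * delta = xH.

(** Rounding every state of an optimal continuous trajectory to a nearest grid
    point moves each state by at most [delta].  Since every cost function has
    subgradients bounded by [G], each operating cost grows by at most
    [G * delta], and each switching cost [theta * nrm (x^t - x^(t-1))] by at
    most [2 * theta * nrm 1 * delta].  Hence
    [OPT_C <= OPT_D <= OPT_C + T * (G + 2 * theta * nrm 1) * delta], and the
    gap vanishes with [delta]. *)

From Stdlib Require Import Reals.
From Coquelicot Require Import Coquelicot.
From Stdlib Require Import Lra Lia IndefiniteDescription.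
Open Scope R_scope.

Lemma grid_point_near (xL d : R) (n : nat) : 0 < d ->
  forall x, xL <= x <= xL + INR n * d ->
  exists k, (k <= n)%nat /\ Rabs (xL + INR k * d - x) <= d.
Proof.
  intros Hd. induction n as [|n IH]; intros x Hx.
  - exists O. split; [lia|]. simpl in *. rewrite Rabs_le_between. lra.
  - destruct (Rle_dec x (xL + INR n * d)) as [Hle|Hgt].
    + destruct (IH x ltac:(lra)) as [k [Hk Hdist]].
      exists k. split; [lia|exact Hdist].
    + exists (S n). split; [lia|]. rewrite S_INR in *. rewrite Rabs_le_between. nra.
Qed.

Lemma disc_states_inF xL xH d m y : valid_disc_system xL xH d m ->
  disc_states xL d m y -> inF xL xH y.
Proof.
  intros [Hd [Hm Heq]] [k [Hk ->]]. unfold inF.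
  assert (0 <= INR k) by apply pos_INR.
  assert (INR k <= INR (m - 1)) by (apply le_INR; lia).
  split; nra.
Qed.

Lemma disc_states_near xL xH d m x : valid_disc_system xL xH d m -> inF xL xH x ->
  exists y, disc_states xL d m y /\ Rabs (y - x) <= d.
Proof.
  intros [Hd [Hm Heq]] Hx. unfold inF in Hx.
  destruct (grid_point_near xL d (m - 1) Hd x ltac:(lra)) as [k [Hk Hdist]].
  exists (xL + INR k * d). split; [|exact Hdist].
  exists k. split; [lia|reflexivity].
Qed.

Lemma admissible_round (M : R -> Prop) (T : nat) (x : nat -> R) (d : R) :
  0 <= d -> admissible (fun y => exists z, M z /\ Rabs (z - y) <= d) T x ->
  exists z, admissible M T z /\ forall t, (t <= T)%nat -> Rabs (z t - x t) <= d.
Proof.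
  intros Hd [Hx0 HxS].
  destruct (functional_choice (fun t y =>
      (t = O -> y = 0) /\ ((1 <= t <= T)%nat -> M y /\ Rabs (y - x t) <= d)))
    as [z Hz].
  { intros [|t].
    - exists 0. split; [reflexivity|lia].
    - destruct (Compare_dec.le_lt_dec (S t) T) as [Ht|Ht].
      + destruct (HxS (S t) ltac:(lia)) as [y Hy]. exists y. split; [discriminate|auto].
      + exists 0. split; [discriminate|lia]. }
  exists z. split.
  - split; [apply Hz; reflexivity|]. intros t Ht. apply Hz, Ht.
  - intros [|t] Ht.
    + rewrite Hx0, (proj1 (Hz O) eq_refl), Rminus_0_r, Rabs_R0. exact Hd.
    + apply Hz. lia.
Qed.

Lemma admissible_weaken (M M' : R -> Prop) T x :
  (forall y, M y -> M' y) -> admissible M T x -> admissible M' T x.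
Proof. intros HMM' [Hx0 HxS]. split; auto. Qed.

Lemma is_opt_cost_le_of_sub c N T (M M' : R -> Prop) v v' :
  (forall y, M y -> M' y) -> is_opt_cost c N T M v -> is_opt_cost c N T M' v' ->
  v' <= v.
Proof.
  intros HMM' [[x [Hx <-]] _] [_ Hmin'].
  apply Hmin'. exact (admissible_weaken M M' T x HMM' Hx).
Qed.

Lemma subgradient_le_shift xL xH f y x g G d :
  subgradient xL xH f y g -> inF xL xH x -> Rabs g <= G -> Rabs (y - x) <= d ->
  f y <= f x + G * d.
Proof.
  intros Hsub Hx Hg Hyx. specialize (Hsub x Hx).
  assert (g * (y - x) <= G * d).
  { eapply Rle_trans; [apply Rle_abs|]. rewrite Rabs_mult.
    apply Rmult_le_compat; auto using Rabs_pos. }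
  lra.
Qed.

Lemma norm_homogeneous nrm : is_norm nrm -> forall a, nrm a = Rabs a * nrm 1.
Proof. intros [_ [_ [Hhom _]]] a. rewrite <- Hhom. f_equal. ring. Qed.

Lemma scaled_norm_add_le nrm theta : is_norm nrm -> 0 <= theta ->
  forall a b, theta * nrm (a + b) <= theta * nrm a + theta * nrm 1 * Rabs b.
Proof.
  intros Hn Htheta a b.
  pose proof (proj2 (proj2 (proj2 Hn)) a b) as Htri.
  rewrite (norm_homogeneous nrm Hn b) in Htri.
  apply Rmult_le_compat_l with (r := theta) in Htri; lra.
Qed.

Section TrajectoryPerturbation.

Variables (c : nat -> R -> R) (N : R -> R) (x z : nat -> R) (G L d : R).

Hypothesis HL : 0 <= L.
Hypothesis HN : forall a b, N (a + b) <= N a + L * Rabs b.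

Lemma traj_cost_perturb (n : nat) :
  (forall t, (t <= n)%nat -> Rabs (z t - x t) <= d) ->
  (forall t, (1 <= t <= n)%nat -> c t (z t) <= c t (x t) + G * d) ->
  traj_cost c N z n <= traj_cost c N x n + INR n * (G + 2 * L) * d.
Proof.
  induction n as [|n IH]; intros Hzx Hc; [simpl; lra|].
  simpl traj_cost. rewrite S_INR.
  assert (IHn := IH (fun t Ht => Hzx t ltac:(lia)) (fun t Ht => Hc t ltac:(lia))).
  assert (Hcn := Hc (S n) ltac:(lia)).
  assert (Hjump : Rabs ((z (S n) - x (S n)) - (z n - x n)) <= 2 * d).
  { eapply Rle_trans; [apply Rabs_triang|]. rewrite Rabs_Ropp.
    pose proof (Hzx (S n) ltac:(lia)). pose proof (Hzx n ltac:(lia)). lra. }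
  assert (Hsw := HN (x (S n) - x n) ((z (S n) - x (S n)) - (z n - x n))).
  replace (x (S n) - x n + (z (S n) - x (S n) - (z n - x n)))
    with (z (S n) - z n) in Hsw by ring.
  assert (L * Rabs ((z (S n) - x (S n)) - (z n - x n)) <= L * (2 * d))
    by (apply Rmult_le_compat_l; assumption).
  lra.
Qed.

End TrajectoryPerturbation.

Lemma opt_disc_cont_gap xL xH nrm theta c T G d m vD vC :
  is_norm nrm -> 0 <= theta ->
  (forall t y, (1 <= t <= T)%nat -> inF xL xH y ->
     exists g, Rabs g <= G /\ subgradient xL xH (c t) y g) ->
  valid_disc_system xL xH d m ->
  is_opt_cost c (fun a => theta * nrm a) T (disc_states xL d m) vD ->
  is_opt_cost c (fun a => theta * nrm a) T (inF xL xH) vC ->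
  0 <= vD - vC <= INR T * (G + 2 * (theta * nrm 1)) * d.
Proof.
  intros Hn Htheta HG Hv HD HC.
  split.
  - enough (vC <= vD) by lra.
    exact (is_opt_cost_le_of_sub c _ T _ _ vD vC (fun y => disc_states_inF xL xH d m y Hv) HD HC).
  - destruct HC as [[x [Hx <-]] _]. destruct HD as [_ HDmin].
    assert (Hd : 0 <= d) by (destruct Hv; lra).
    destruct (admissible_round (disc_states xL d m) T x d Hd) as [z [Hz Hzx]].
    { apply (admissible_weaken (inF xL xH)); [|exact Hx].
      intros y Hy. exact (disc_states_near xL xH d m y Hv Hy). }
    assert (HzF : forall t, (1 <= t <= T)%nat -> inF xL xH (z t))
      by (intros t Ht; apply (disc_states_inF xL xH d m (z t) Hv), Hz, Ht).
    assert (Hperturb := traj_cost_perturb c (fun a => theta * nrm a) x z G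
      (theta * nrm 1) d (Rmult_le_pos _ _ Htheta (proj1 Hn 1))
      (scaled_norm_add_le nrm theta Hn Htheta) T Hzx).
    assert (Hcost : forall t, (1 <= t <= T)%nat -> c t (z t) <= c t (x t) + G * d).
    { intros t Ht. destruct (HG t (z t) Ht (HzF t Ht)) as [g [Hg Hsub]].
      exact (subgradient_le_shift xL xH (c t) (z t) (x t) g G d Hsub
        (proj2 Hx t Ht) Hg (Hzx t ltac:(lia))). }
    specialize (HDmin z Hz). specialize (Hperturb Hcost). lra.
Qed.

Theorem lemma12
  (xL xH : R) (nrm : R -> R) (theta : R) (c : nat -> R -> R) (T : nat)
  (delta : nat -> R) (m : nat -> nat) (optD : nat -> R) (optC : R) :
  0 <= xL -> xL <= xH ->
  is_norm nrm -> 1 <= theta ->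
  (forall t, (1 <= t <= T)%nat -> convex_on xL xH (c t)) ->
  (forall t x, (1 <= t <= T)%nat -> inF xL xH x -> 0 <= c t x) ->
  unif_bounded_subgrad xL xH c T ->
  (forall i, valid_disc_system xL xH (delta i) (m i)) ->
  is_lim_seq delta 0 ->
  (forall i, is_opt_cost c (fun z => theta * nrm z) T
               (disc_states xL (delta i) (m i)) (optD i)) ->
  is_opt_cost c (fun z => theta * nrm z) T (inF xL xH) optC ->
  is_lim_seq (fun i => Rabs (optD i - optC)) 0.
Proof.
  intros _ _ Hn Htheta _ _ [G HG] Hv Hlim HD HC.
  set (K := INR T * (G + 2 * (theta * nrm 1))).
  assert (Hgap : forall i, 0 <= optD i - optC <= K * delta i).
  { intros i. unfold K.
    exact (opt_disc_cont_gap xL xH nrm theta c T G _ _ _ _ Hn ltac:(lra) HG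
      (Hv i) (HD i) HC). }
  apply is_lim_seq_le_le with (u := fun _ => 0) (w := fun i => K * delta i).
  - intros i. rewrite Rabs_pos_eq; pose proof (Hgap i); lra.
  - apply is_lim_seq_const.
  - replace (Finite 0) with (Rbar_mult K 0) by (simpl; f_equal; ring).
    apply is_lim_seq_scal_l. exact Hlim.
Qed.
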